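(* Let $(\Phi,\mathtt{Prg},\mathrm{AT})$ be a CLC SPL with $\Phi=(\mathcal F,\phi)$. If $\phi\vdash\mathtt{Prg}\ \textsc{ok}$ (family-based typing), then $\vdash\mathtt{Prg}\ \textsc{ok}$ (LC typing), i.e. the code base is a well-typed LC program.
   Context: **Lightweight C (LC).** Types: $T ::= \mathtt{int}\mid \mathtt{void}* \mid \mathtt{struct}\ s*$ ($s$ a struct name). Expressions: $e ::= n$ (integer literal) $\mid \mathtt{NULL}\mid x$ (parameter name) $\mid f(e_1,\dots,e_k)$ ($k\ge0$) $\mid e\texttt{->}m \mid e\texttt{->}m=e \mid e\,?\,e:e \mid (e_1,\dots,e_k)$ ($k\ge1$, a parenthesized expression sequence) $\mid \mathsf{uop}\ e\mid e\ \mathsf{bop}\ e\mid \mathtt{MALLOC}(\mathtt{struct}\ s)\mid \mathtt{MFREE}(e)$. A struct definition is $\mathtt{struct}\ s\{T_1\,m_1;\dots;T_k\,m_k;\};$ (distinct member names); a function definition is $T_0\ f(T_1\,x_1,\dots,T_k\,x_k)\{\mathtt{return}\ e;\}$ (distinct parameter names); a program $\mathtt{Prg}=\overline{SD}\ \overline{FD}$ is a sequence of struct definitions followed by a sequence of function definitions, with distinct struct names and distinct function names. $\mathtt{Prg}$ is regarded as a finite map: $\mathtt{Prg}(s)$ is the definition of struct $s$, $\mathtt{Prg}(s)(m)=$ ''$T\ m$'' is the declaration of member $m$ in it, $\mathtt{Prg}(f)$ is the definition of function $f$; $\mathrm{dom}(\overline{SD})$ is the set of defined struct names. $\mathtt{Prg}$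 is *sane* if (1) every struct name occurring anywhere in $\mathtt{Prg}$ is defined in $\mathtt{Prg}$, (2) every function name occurring in the function definitions is defined in $\mathtt{Prg}$, (3) $\mathtt{Prg}(\mathtt{main})=\mathtt{int\ main}()\{\mathtt{return}\ e;\}$ for some $e$. Operator types: unary $-:(\mathtt{int})\to\mathtt{int}$; unary $!:(T)\to\mathtt{int}$ for every type $T$; binary $+,-,*,/,\&\&,||,<,<=,>,>=:(\mathtt{int},\mathtt{int})\to\mathtt{int}$; binary $==,!=:(T,T)\to\mathtt{int}$ for every type $T$. Subtyping $\le$ is the reflexive closure of $\mathtt{void}*\le\mathtt{struct}\ s*$ for every struct $s$ defined in the program; $\max_\le\{T_1,T_2\}$ is the greater of two $\le$-comparable types. LC typing ($\Gamma$ a finite map from parameter names to types): (T-prg) if $\mathtt{Prg}$ is sane, $\mathtt{Prg}=\overline{SD}\,\overline{FD}$ and $\vdash FD\ \textsc{ok}$ for every $FD$ in $\overline{FD}$, then $\vdash\mathtt{Prg}\ \textsc{ok}$. (T-fun) if $x_1{:}T_1,\dots,x_k{:}T_k\vdash e:T'$ and $T'\le T_0$ then $\vdash T_0\,f(T_1x_1,\dots,T_kx_k)\{\mathtt{return}\ e;\}\ \textsc{ok}$. (T-int) $\Gamma\vdash n:\mathtt{int}$. (T-null) $\Gamma\vdash\mathtt{NULL}:\mathtt{void}*$. (T-par) if $x{:}T\in\Gamma$ then $\Gamma\vdash x:T$. (T-app) if $\mathtt{Prg}(f)=T_0\,f(T_1x_1,\dots,T_kx_k)\{\dots\}$, and $\Gamma\vdash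 e_i:T_i'$, $T_i'\le T_i$ for $i=1..k$ (exactly $k$ arguments), then $\Gamma\vdash f(e_1,\dots,e_k):T_0$. (T-member) if $\Gamma\vdash e_0:\mathtt{struct}\ s*$ and $\mathtt{Prg}(s)(m)=T\,m$ then $\Gamma\vdash e_0\texttt{->}m:T$. (T-assign) if additionally $\Gamma\vdash e_1:T_1$, $T_1\le T$, then $\Gamma\vdash e_0\texttt{->}m=e_1:T$. (T-cond) if $\Gamma\vdash e_j:T_j$ ($j=0,1,2$) and $T_3=\max_\le\{T_1,T_2\}$ then $\Gamma\vdash e_0?e_1:e_2:T_3$. (T-seq) if $\Gamma\vdash e_i:T_i$ for $i=1..n$ then $\Gamma\vdash(e_1,\dots,e_n):T_n$. (T-uop) if $\Gamma\vdash e_0:T_0$ and $\mathsf{uop}$ has type $(T_0)\to\mathtt{int}$ then $\Gamma\vdash\mathsf{uop}\,e_0:\mathtt{int}$. (T-bop) if $\Gamma\vdash e_1:T_1$, $\Gamma\vdash e_2:T_2$, $T_3=\max_\le\{T_1,T_2\}$ and $\mathsf{bop}$ has type $(T_3,T_3)\to\mathtt{int}$ then $\Gamma\vdash e_1\,\mathsf{bop}\,e_2:\mathtt{int}$. (T-malloc) if $s\in\mathrm{dom}(\overline{SD})$ then $\Gamma\vdash\mathtt{MALLOC}(\mathtt{struct}\ s):\mathtt{struct}\ s*$. (T-mfree) if $\Gamma\vdash e_0:\mathtt{struct}\ s*$ then $\Gamma\vdash\mathtt{MFREE}(e_0):\mathtt{void}*$. **Colored LC (CLC).** A feature model $\Phi=(\mathcal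 F,\phi)$: $\mathcal F$ a finite set of features, $\phi$ a propositional formula over $\mathcal F$ (connectives $!,\&\&,||$, constants $0,1$). For formulas, $\theta\models\theta'$ means $\theta\Rightarrow\theta'$ is valid; $\psi_1\Rightarrow\psi_2$ abbreviates $!\psi_1||\psi_2$ and $\psi_1\Leftrightarrow\psi_2$ the conjunction of both implications. An SPL is a triple $(\Phi,\mathtt{Prg},\mathrm{AT})$ with $\mathtt{Prg}$ an LC program (the code base) and $\mathrm{AT}$ an annotation table assigning a propositional formula over $\mathcal F$ to each occurrence of an annotable fragment of $\mathtt{Prg}$; annotable fragments are: each struct definition, each member declaration $T\,m$, each function definition, each formal parameter declaration $T\,x$, each argument of a function call, and each element of a parenthesized sequence. Occurrences not explicitly annotated have annotation $1$. Abbreviations: $\mathrm{AT}(s)=\mathrm{AT}(\mathtt{Prg}(s))$ is the annotation of the definition of struct $s$, $\mathrm{AT}(f)=\mathrm{AT}(\mathtt{Prg}(f))$ that of function $f$; $\mathrm{AT}(\mathtt{int})=\mathrm{AT}(\mathtt{void}* )=1$, $\mathrm{AT}(\mathtt{struct}\ s* )=\mathrm{AT}(\mathtt{Prg}(s))$; $\exists(e_1,\dots,e_n)=\mathrm{AT}(e_1)||\cdots||\mathrm{AT}(e_n)$; $\mathtt{neverLast}(k,(e_1,\dots,e_n))=\,!\mathrm{AT}(e_k)||\mathrm{AT}(e_{k+1})||\cdots||\mathrm{AT}(e_n)$. An annotated type environment $\Delta$ maps parameter names to pairs written $x{:}T$ with $\psi$. Family-based typing: (FT-prg) if $\mathtt{Prg}$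 is sane, $\mathrm{AT}(\mathtt{main})=1$, $\mathtt{Prg}=\overline{SD}\,\overline{FD}$, $\phi\,\&\&\,\mathrm{AT}(SD)\vdash SD\ \textsc{ok}$ for each $SD$ in $\overline{SD}$ and $\phi\,\&\&\,\mathrm{AT}(FD)\vdash FD\ \textsc{ok}$ for each $FD$ in $\overline{FD}$, then $\phi\vdash\mathtt{Prg}\ \textsc{ok}$. (FT-struct) if $\theta\models\mathrm{AT}(T_i\,m_i)\Rightarrow\mathrm{AT}(T_i)$ for all $i$, then $\theta\vdash\mathtt{struct}\ s\{T_1m_1;\dots;T_km_k;\}\ \textsc{ok}$. (FT-fun) if $\theta\models\mathrm{AT}(T_0)$, $\theta\models\mathrm{AT}(T_i\,x_i)\Rightarrow\mathrm{AT}(T_i)$ for all $i$, $\theta;\ x_1{:}T_1\text{ with }\mathrm{AT}(T_1x_1),\dots,x_k{:}T_k\text{ with }\mathrm{AT}(T_kx_k)\vdash e:T'$ and $T'\le T_0$, then $\theta\vdash T_0\,f(T_1x_1,\dots,T_kx_k)\{\mathtt{return}\ e;\}\ \textsc{ok}$. (FT-int) $\theta;\Delta\vdash n:\mathtt{int}$. (FT-null) $\theta;\Delta\vdash\mathtt{NULL}:\mathtt{void}*$. (FT-par) if $x{:}T$ with $\psi$ is in $\Delta$ and $\theta\models\psi$ then $\theta;\Delta\vdash x:T$. (FT-app) if $\mathtt{Prg}(f)=T_0\,f(T_1x_1,\dots,T_kx_k)\{\dots\}$, $\theta\models\mathrm{AT}(\mathtt{Prg}(f))$, and for $i=1..k$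 (exactly $k$ arguments) $\theta;\Delta\vdash e_i:T_i'$, $T_i'\le T_i$ and $\theta\models\mathrm{AT}(e_i)\Leftrightarrow\mathrm{AT}(T_ix_i)$, then $\theta;\Delta\vdash f(e_1,\dots,e_k):T_0$. (FT-member) if $\theta;\Delta\vdash e_0:\mathtt{struct}\ s*$, $\mathtt{Prg}(s)(m)=T\,m$ and $\theta\models\mathrm{AT}(T\,m)$ then $\theta;\Delta\vdash e_0\texttt{->}m:T$. (FT-assign) if additionally $\theta;\Delta\vdash e_1:T_1$ and $T_1\le T$ then $\theta;\Delta\vdash e_0\texttt{->}m=e_1:T$. (FT-cond), (FT-uop), (FT-bop), (FT-mfree): as T-cond, T-uop, T-bop, T-mfree with every judgment $\Gamma\vdash$ replaced by $\theta;\Delta\vdash$. (FT-seq) if $\theta\models\exists(e_1,\dots,e_n)$, $\theta\,\&\&\,\mathrm{AT}(e_i);\Delta\vdash e_i:T_i$ for all $i$, $T=T_n$, and $\theta\models\mathtt{neverLast}(i,(e_1,\dots,e_n))$ for every $i$ with $T_i\ne T$, then $\theta;\Delta\vdash(e_1,\dots,e_n):T$. (FT-malloc) if $s\in\mathrm{dom}(\overline{SD})$ and $\theta\models\mathrm{AT}(\mathtt{Prg}(s))$ then $\theta;\Delta\vdash\mathtt{MALLOC}(\mathtt{struct}\ s):\mathtt{struct}\ s*$. *)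

From Stdlib Require Import List String ZArith Bool.
Import ListNotations.


Definition sname := string.
Definition mname := string.
Definition pname := string.
Definition fname := string.

Inductive formula (Fe : Type) : Type :=
| FVar (f : Fe)
| FNot (p : formula Fe)
| FAnd (p q : formula Fe)
| FOr (p q : formula Fe)
| F0
| F1.
Arguments FVar {Fe} f.
Arguments FNot {Fe} p.
Arguments FAnd {Fe} p q.
Arguments FOr {Fe} p q.
Arguments F0 {Fe}.
Arguments F1 {Fe}.

Fixpoint feval {Fe : Type} (v : Fe -> bool) (p : formula Fe) : bool :=
  match p with
  | FVar f => v f
  | FNot p => negb (feval v p)
  | FAnd p q => feval v p && feval v q
  | FOr p q => feval v p || feval v q
  | F0 => false
  | F1 => true
  end.

Definition entails {Fe : Type} (th th' : formula Fe) : Prop :=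
  forall v : Fe -> bool, feval v th = true -> feval v th' = true.

Definition fimpl {Fe : Type} (p q : formula Fe) : formula Fe := FOr (FNot p) q.
Definition fiff {Fe : Type} (p q : formula Fe) : formula Fe :=
  FAnd (fimpl p q) (fimpl q p).
Definition fors {Fe : Type} (l : list (formula Fe)) : formula Fe :=
  fold_right FOr F0 l.

(** The syntax is parameterized by the type [A] of labels carried by the
    annotable fragments (struct definitions, member declarations, function
    definitions, formal parameter declarations, call arguments, elements of
    parenthesized sequences).  A CLC SPL's code base together with its
    annotation table is a [program (formula Fe)]; the plain LC code base is
    obtained by erasing the labels ([erase_program], labels [unit]). *)
Inductive ty : Type :=
| TInt
| TVoid                      (* void* *)
| TStruct (s : sname).       (* struct s* *)

Inductive uop : Type := UNeg | UNot.
Inductive bop : Type :=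
| BAdd | BSub | BMul | BDiv | BAnd | BOr | BLt | BLe | BGt | BGe | BEq | BNe.

Inductive exp (A : Type) : Type :=
| ENum (n : Z)
| ENull
| EPar (x : pname)
| EApp (f : fname) (args : list (A * exp A))
| EMem (e : exp A) (m : mname)                       (* e->m *)
| EAssign (e0 : exp A) (m : mname) (e1 : exp A)
| ECond (e0 e1 e2 : exp A)
| ESeq (es : list (A * exp A))
| EUop (u : uop) (e : exp A)
| EBop (b : bop) (e1 e2 : exp A)
| EMalloc (s : sname)
| EFree (e : exp A).
Arguments ENum {A} n.
Arguments ENull {A}.
Arguments EPar {A} x.
Arguments EApp {A} f args.
Arguments EMem {A} e m.
Arguments EAssign {A} e0 m e1.
Arguments ECond {A} e0 e1 e2.
Arguments ESeq {A} es.
Arguments EUop {A} u e.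
Arguments EBop {A} b e1 e2.
Arguments EMalloc {A} s.
Arguments EFree {A} e.

Record sdef (A : Type) := SDef {
  sd_ann : A;
  sd_name : sname;
  sd_members : list (A * (ty * mname))
}.
Arguments SDef {A}.
Arguments sd_ann {A}.
Arguments sd_name {A}.
Arguments sd_members {A}.

Record fdef (A : Type) := FDef {
  fd_ann : A;
  fd_ret : ty;
  fd_name : fname;
  fd_params : list (A * (ty * pname));
  fd_body : exp A
}.
Arguments FDef {A}.
Arguments fd_ann {A}.
Arguments fd_ret {A}.
Arguments fd_name {A}.
Arguments fd_params {A}.
Arguments fd_body {A}.

Record program (A : Type) := Program {
  p_structs : list (sdef A);
  p_funs : list (fdef A)
}.
Arguments Program {A}.
Arguments p_structs {A}.
Arguments p_funs {A}.

Definition wf_program {A : Type} (P : program A) : Prop :=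
  NoDup (map sd_name (p_structs P)) /\
  NoDup (map fd_name (p_funs P)) /\
  Forall (fun sd => NoDup (map (fun d => snd (snd d)) (sd_members sd))) (p_structs P) /\
  Forall (fun fd => NoDup (map (fun d => snd (snd d)) (fd_params fd))) (p_funs P).

Fixpoint erase_exp {A : Type} (e : exp A) : exp unit :=
  match e with
  | ENum n => ENum n
  | ENull => ENull
  | EPar x => EPar x
  | EApp f args => EApp f (map (fun a => (tt, erase_exp (snd a))) args)
  | EMem e m => EMem (erase_exp e) m
  | EAssign e0 m e1 => EAssign (erase_exp e0) m (erase_exp e1)
  | ECond e0 e1 e2 => ECond (erase_exp e0) (erase_exp e1) (erase_exp e2)
  | ESeq es => ESeq (map (fun a => (tt, erase_exp (snd a))) es)
  | EUop u e => EUop u (erase_exp e)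
  | EBop b e1 e2 => EBop b (erase_exp e1) (erase_exp e2)
  | EMalloc s => EMalloc s
  | EFree e => EFree (erase_exp e)
  end.

Definition erase_decl {A B : Type} (d : A * B) : unit * B := (tt, snd d).

Definition erase_sdef {A : Type} (sd : sdef A) : sdef unit :=
  SDef tt (sd_name sd) (map erase_decl (sd_members sd)).

Definition erase_fdef {A : Type} (fd : fdef A) : fdef unit :=
  FDef tt (fd_ret fd) (fd_name fd) (map erase_decl (fd_params fd))
       (erase_exp (fd_body fd)).

Definition erase_program {A : Type} (P : program A) : program unit :=
  Program (map erase_sdef (p_structs P)) (map erase_fdef (p_funs P)).

Definition find_struct {A : Type} (P : program A) (s : sname) : option (sdef A) :=
  find (fun sd => String.eqb (sd_name sd) s) (p_structs P).

Definition find_fun {A : Type} (P : program A) (f : fname) : option (fdef A) :=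
  find (fun fd => String.eqb (fd_name fd) f) (p_funs P).

Definition find_member {A : Type} (sd : sdef A) (m : mname) : option (A * ty) :=
  match find (fun d => String.eqb (snd (snd d)) m) (sd_members sd) with
  | Some d => Some (fst d, fst (snd d))
  | None => None
  end.

Definition struct_defined {A : Type} (P : program A) (s : sname) : Prop :=
  In s (map sd_name (p_structs P)).

Fixpoint lookup {B : Type} (G : list (pname * B)) (x : pname) : option B :=
  match G with
  | [] => None
  | (y, b) :: G' => if String.eqb y x then Some b else lookup G' x
  end.

Definition ty_structs (T : ty) : list sname :=
  match T with TStruct s => [s] | _ => [] end.

Fixpoint exp_structs {A : Type} (e : exp A) : list sname :=
  match e with
  | ENum _ | ENull | EPar _ => []
  | EApp _ args => flat_map (fun a => exp_structs (snd a)) args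
  | EMem e _ => exp_structs e
  | EAssign e0 _ e1 => exp_structs e0 ++ exp_structs e1
  | ECond e0 e1 e2 => exp_structs e0 ++ exp_structs e1 ++ exp_structs e2
  | ESeq es => flat_map (fun a => exp_structs (snd a)) es
  | EUop _ e => exp_structs e
  | EBop _ e1 e2 => exp_structs e1 ++ exp_structs e2
  | EMalloc s => [s]
  | EFree e => exp_structs e
  end.

Fixpoint exp_funs {A : Type} (e : exp A) : list fname :=
  match e with
  | ENum _ | ENull | EPar _ | EMalloc _ => []
  | EApp f args => f :: flat_map (fun a => exp_funs (snd a)) args
  | EMem e _ => exp_funs e
  | EAssign e0 _ e1 => exp_funs e0 ++ exp_funs e1
  | ECond e0 e1 e2 => exp_funs e0 ++ exp_funs e1 ++ exp_funs e2
  | ESeq es => flat_map (fun a => exp_funs (snd a)) es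
  | EUop _ e => exp_funs e
  | EBop _ e1 e2 => exp_funs e1 ++ exp_funs e2
  | EFree e => exp_funs e
  end.

Definition prog_structs {A : Type} (P : program A) : list sname :=
  (map sd_name (p_structs P) ++
  flat_map (fun sd => flat_map (fun d => ty_structs (fst (snd d))) (sd_members sd))
           (p_structs P) ++
  flat_map (fun fd : fdef A => (ty_structs (fd_ret fd) ++
                      flat_map (fun d => ty_structs (fst (snd d))) (fd_params fd) ++
                      exp_structs (fd_body fd))%list)
           (p_funs P))%list.

Definition prog_funs {A : Type} (P : program A) : list fname :=
  flat_map (fun fd => fd_name fd :: exp_funs (fd_body fd)) (p_funs P).

Definition sane {A : Type} (P : program A) : Prop :=
  (forall s, In s (prog_structs P) -> struct_defined P s) /\
  (forall f, In f (prog_funs P) -> In f (map fd_name (p_funs P))) /\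
  (exists fd, find_fun P "main"%string = Some fd /\ fd_ret fd = TInt /\ fd_params fd = []).

Definition subty {A : Type} (P : program A) (T1 T2 : ty) : Prop :=
  T1 = T2 \/ (exists s, T1 = TVoid /\ T2 = TStruct s /\ struct_defined P s).

Definition is_max {A : Type} (P : program A) (T1 T2 T3 : ty) : Prop :=
  (subty P T1 T2 /\ T3 = T2) \/ (subty P T2 T1 /\ T3 = T1).

Definition uop_has_type (u : uop) (T : ty) : Prop :=
  match u with UNeg => T = TInt | UNot => True end.

Definition bop_has_type (b : bop) (T : ty) : Prop :=
  match b with BEq | BNe => True | _ => T = TInt end.

Section LCTyping.
Context {A : Type} (P : program A).

Inductive lc_exp (G : list (pname * ty)) : exp A -> ty -> Prop :=
| T_int n : lc_exp G (ENum n) TInt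
| T_null : lc_exp G ENull TVoid
| T_par x T : lookup G x = Some T -> lc_exp G (EPar x) T
| T_app f args fd :
    find_fun P f = Some fd ->
    Forall2 (fun a d => exists T', lc_exp G (snd a) T' /\ subty P T' (fst (snd d)))
            args (fd_params fd) ->
    lc_exp G (EApp f args) (fd_ret fd)
| T_member e0 s m sd a T :
    lc_exp G e0 (TStruct s) ->
    find_struct P s = Some sd -> find_member sd m = Some (a, T) ->
    lc_exp G (EMem e0 m) T
| T_assign e0 s m e1 sd a T T1 :
    lc_exp G e0 (TStruct s) ->
    find_struct P s = Some sd -> find_member sd m = Some (a, T) ->
    lc_exp G e1 T1 -> subty P T1 T ->
    lc_exp G (EAssign e0 m e1) T
| T_cond e0 e1 e2 T0 T1 T2 T3 :
    lc_exp G e0 T0 -> lc_exp G e1 T1 -> lc_exp G e2 T2 -> is_max P T1 T2 T3 ->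
    lc_exp G (ECond e0 e1 e2) T3
| T_seq es Ts :
    es <> [] ->
    Forall2 (fun a T => lc_exp G (snd a) T) es Ts ->
    lc_exp G (ESeq es) (last Ts TInt)
| T_uop u e0 T0 :
    lc_exp G e0 T0 -> uop_has_type u T0 -> lc_exp G (EUop u e0) TInt
| T_bop b e1 e2 T1 T2 T3 :
    lc_exp G e1 T1 -> lc_exp G e2 T2 -> is_max P T1 T2 T3 -> bop_has_type b T3 ->
    lc_exp G (EBop b e1 e2) TInt
| T_malloc s : struct_defined P s -> lc_exp G (EMalloc s) (TStruct s)
| T_mfree e0 s : lc_exp G e0 (TStruct s) -> lc_exp G (EFree e0) TVoid.

Definition lc_fun_ok (fd : fdef A) : Prop :=
  exists T', lc_exp (map (fun d => (snd (snd d), fst (snd d))) (fd_params fd))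
                    (fd_body fd) T' /\ subty P T' (fd_ret fd).

Definition lc_prg_ok : Prop := sane P /\ Forall lc_fun_ok (p_funs P).
End LCTyping.

Section FTyping.
Context {Fe : Type} (P : program (formula Fe)).

Definition at_ty (T : ty) : formula Fe :=
  match T with
  | TStruct s => match find_struct P s with Some sd => sd_ann sd | None => F1 end
  | _ => F1
  end.

Fixpoint never_last_ok (th : formula Fe) (es : list (formula Fe * exp (formula Fe)))
         (Ts : list ty) (T : ty) : Prop :=
  match es, Ts with
  | a :: es', Ti :: Ts' =>
      (Ti <> T -> entails th (FOr (FNot (fst a)) (fors (map fst es')))) /\
      never_last_ok th es' Ts' T
  | _, _ => True
  end.

Inductive ft_exp : formula Fe -> list (pname * (ty * formula Fe)) ->
                   exp (formula Fe) -> ty -> Prop :=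
| FT_int th D n : ft_exp th D (ENum n) TInt
| FT_null th D : ft_exp th D ENull TVoid
| FT_par th D x T psi :
    lookup D x = Some (T, psi) -> entails th psi -> ft_exp th D (EPar x) T
| FT_app th D f args fd :
    find_fun P f = Some fd ->
    entails th (fd_ann fd) ->
    Forall2 (fun a d => exists T', ft_exp th D (snd a) T' /\ subty P T' (fst (snd d))
                                   /\ entails th (fiff (fst a) (fst d)))
            args (fd_params fd) ->
    ft_exp th D (EApp f args) (fd_ret fd)
| FT_member th D e0 s m sd a T :
    ft_exp th D e0 (TStruct s) ->
    find_struct P s = Some sd -> find_member sd m = Some (a, T) ->
    entails th a ->
    ft_exp th D (EMem e0 m) T
| FT_assign th D e0 s m e1 sd a T T1 :
    ft_exp th D e0 (TStruct s) ->
    find_struct P s = Some sd -> find_member sd m = Some (a, T) ->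
    entails th a ->
    ft_exp th D e1 T1 -> subty P T1 T ->
    ft_exp th D (EAssign e0 m e1) T
| FT_cond th D e0 e1 e2 T0 T1 T2 T3 :
    ft_exp th D e0 T0 -> ft_exp th D e1 T1 -> ft_exp th D e2 T2 -> is_max P T1 T2 T3 ->
    ft_exp th D (ECond e0 e1 e2) T3
| FT_seq th D es Ts T :
    es <> [] ->
    entails th (fors (map fst es)) ->
    Forall2 (fun a Ti => ft_exp (FAnd th (fst a)) D (snd a) Ti) es Ts ->
    T = last Ts TInt ->
    never_last_ok th es Ts T ->
    ft_exp th D (ESeq es) T
| FT_uop th D u e0 T0 :
    ft_exp th D e0 T0 -> uop_has_type u T0 -> ft_exp th D (EUop u e0) TInt
| FT_bop th D b e1 e2 T1 T2 T3 :
    ft_exp th D e1 T1 -> ft_exp th D e2 T2 -> is_max P T1 T2 T3 -> bop_has_type b T3 ->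
    ft_exp th D (EBop b e1 e2) TInt
| FT_malloc th D s sd :
    struct_defined P s -> find_struct P s = Some sd -> entails th (sd_ann sd) ->
    ft_exp th D (EMalloc s) (TStruct s)
| FT_mfree th D e0 s : ft_exp th D e0 (TStruct s) -> ft_exp th D (EFree e0) TVoid.

Definition ft_struct_ok (th : formula Fe) (sd : sdef (formula Fe)) : Prop :=
  Forall (fun d => entails th (fimpl (fst d) (at_ty (fst (snd d))))) (sd_members sd).

Definition ft_fun_ok (th : formula Fe) (fd : fdef (formula Fe)) : Prop :=
  entails th (at_ty (fd_ret fd)) /\
  Forall (fun d => entails th (fimpl (fst d) (at_ty (fst (snd d))))) (fd_params fd) /\
  exists T', ft_exp th (map (fun d => (snd (snd d), (fst (snd d), fst d))) (fd_params fd))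
                    (fd_body fd) T' /\ subty P T' (fd_ret fd).

Definition ft_prg_ok (phi : formula Fe) : Prop :=
  sane P /\
  (exists fd, find_fun P "main"%string = Some fd /\ fd_ann fd = F1) /\
  Forall (fun sd => ft_struct_ok (FAnd phi (sd_ann sd)) sd) (p_structs P) /\
  Forall (fun fd => ft_fun_ok (FAnd phi (fd_ann fd)) fd) (p_funs P).
End FTyping.

(* Family-based typing is a refinement of LC typing: every FT rule is the
   corresponding LC rule with extra presence-condition premises on top.
   Erasing the annotations therefore maps each FT derivation to an LC
   derivation of the same type, in the environment obtained by dropping the
   presence conditions of the parameters, and the sanity conditions are
   insensitive to annotations. *)
From Stdlib Require Import List String.

(* Transparent, so that the guard checker accepts the nested recursive calls
   made through it in [ft_exp_erase]. *)
Lemma Forall2_map_both {X Y X' Y' : Type} (R : X -> Y -> Prop) (R' : X' -> Y' -> Prop)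
    (f : X -> X') (g : Y -> Y') (l1 : list X) (l2 : list Y) :
  (forall a b, R a b -> R' (f a) (g b)) ->
  Forall2 R l1 l2 -> Forall2 R' (map f l1) (map g l2).
Proof. intros HRR' HR; induction HR; constructor; auto. Defined.

Section Erasure.
Context {A : Type}.

Lemma exp_nested_ind (Q : exp A -> Prop) :
  (forall n, Q (ENum n)) ->
  Q ENull ->
  (forall x, Q (EPar x)) ->
  (forall f args, Forall (fun a => Q (snd a)) args -> Q (EApp f args)) ->
  (forall e m, Q e -> Q (EMem e m)) ->
  (forall e0 m e1, Q e0 -> Q e1 -> Q (EAssign e0 m e1)) ->
  (forall e0 e1 e2, Q e0 -> Q e1 -> Q e2 -> Q (ECond e0 e1 e2)) ->
  (forall es, Forall (fun a => Q (snd a)) es -> Q (ESeq es)) ->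
  (forall u e, Q e -> Q (EUop u e)) ->
  (forall b e1 e2, Q e1 -> Q e2 -> Q (EBop b e1 e2)) ->
  (forall s, Q (EMalloc s)) ->
  (forall e, Q e -> Q (EFree e)) ->
  forall e, Q e.
Proof.
  intros Hnum Hnull Hpar Happ Hmem Hassign Hcond Hseq Huop Hbop Hmalloc Hfree.
  fix IH 1.
  assert (IHl : forall l : list (A * exp A), Forall (fun a => Q (snd a)) l).
  { fix IHl 1. intros [|a l]; constructor; [apply IH | apply IHl]. }
  intros [n| |x|f args|e m|e0 m e1|e0 e1 e2|es|u e|b e1 e2|s|e].
  - apply Hnum.
  - apply Hnull.
  - apply Hpar.
  - apply Happ, IHl.
  - apply Hmem, IH.
  - apply Hassign; apply IH.
  - apply Hcond; apply IH.
  - apply Hseq, IHl.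
  - apply Huop, IH.
  - apply Hbop; apply IH.
  - apply Hmalloc.
  - apply Hfree, IH.
Qed.

Lemma flat_map_erase_args {X : Type} (g : exp unit -> list X) (h : exp A -> list X)
    (l : list (A * exp A)) :
  Forall (fun a => g (erase_exp (snd a)) = h (snd a)) l ->
  flat_map (fun a => g (snd a)) (map (fun a => (tt, erase_exp (snd a))) l)
  = flat_map (fun a => h (snd a)) l.
Proof. induction 1; simpl; congruence. Qed.

Lemma exp_structs_erase (e : exp A) : exp_structs (erase_exp e) = exp_structs e.
Proof.
  induction e using exp_nested_ind; simpl; try congruence;
    apply flat_map_erase_args; assumption.
Qed.

Lemma exp_funs_erase (e : exp A) : exp_funs (erase_exp e) = exp_funs e.
Proof.
  induction e using exp_nested_ind; simpl; try congruence;
    f_equal; apply flat_map_erase_args; assumption.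
Qed.

Lemma find_fun_erase (P : program A) f :
  find_fun (erase_program P) f = option_map erase_fdef (find_fun P f).
Proof.
  unfold find_fun; simpl; induction (p_funs P) as [|fd fs IH]; simpl; auto.
  now destruct (String.eqb (fd_name fd) f).
Qed.

Lemma find_struct_erase (P : program A) s :
  find_struct (erase_program P) s = option_map erase_sdef (find_struct P s).
Proof.
  unfold find_struct; simpl; induction (p_structs P) as [|sd ss IH]; simpl; auto.
  now destruct (String.eqb (sd_name sd) s).
Qed.

Lemma find_member_erase (sd : sdef A) m a T :
  find_member sd m = Some (a, T) -> find_member (erase_sdef sd) m = Some (tt, T).
Proof.
  unfold find_member, erase_sdef; simpl.
  induction (sd_members sd) as [|[x [t n]] ds IH]; simpl; [discriminate|].
  destruct (String.eqb n m); [now injection 1 as <- <- | exact IH].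
Qed.

Lemma struct_names_erase (P : program A) :
  map sd_name (p_structs (erase_program P)) = map sd_name (p_structs P).
Proof. now simpl; rewrite map_map. Qed.

Lemma fun_names_erase (P : program A) :
  map fd_name (p_funs (erase_program P)) = map fd_name (p_funs P).
Proof. now simpl; rewrite map_map. Qed.

Lemma struct_defined_erase (P : program A) s :
  struct_defined P s -> struct_defined (erase_program P) s.
Proof. unfold struct_defined; now rewrite struct_names_erase. Qed.

Lemma subty_erase (P : program A) T1 T2 :
  subty P T1 T2 -> subty (erase_program P) T1 T2.
Proof.
  intros [Heq | (s & H1 & H2 & Hs)]; [now left|].
  right; exists s; auto using struct_defined_erase.
Qed.

Lemma is_max_erase (P : program A) T1 T2 T3 :
  is_max P T1 T2 T3 -> is_max (erase_program P) T1 T2 T3.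
Proof. intros [[] | []]; [left | right]; auto using subty_erase. Qed.

Lemma prog_structs_erase (P : program A) :
  prog_structs (erase_program P) = prog_structs P.
Proof.
  unfold prog_structs; rewrite struct_names_erase; simpl.
  rewrite !flat_map_concat_map, !map_map; f_equal; f_equal;
    apply (f_equal (@List.concat _)), map_ext.
  - intros sd; simpl.
    now rewrite !flat_map_concat_map, map_map.
  - intros fd; simpl.
    now rewrite !flat_map_concat_map, map_map, exp_structs_erase.
Qed.

Lemma prog_funs_erase (P : program A) : prog_funs (erase_program P) = prog_funs P.
Proof.
  unfold prog_funs; simpl; rewrite !flat_map_concat_map, map_map; f_equal.
  apply map_ext; intros fd; simpl; now rewrite exp_funs_erase.
Qed.

Lemma sane_erase (P : program A) : sane P -> sane (erase_program P).
Proof.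
  intros (Hstructs & Hfuns & fd & Hmain & Hret & Hparams).
  repeat split.
  - rewrite prog_structs_erase; intros s Hs; apply struct_defined_erase; auto.
  - rewrite prog_funs_erase, fun_names_erase; exact Hfuns.
  - exists (erase_fdef fd); rewrite find_fun_erase, Hmain; simpl.
    now rewrite Hret, Hparams.
Qed.

Definition env_types (D : list (pname * (ty * A))) : list (pname * ty) :=
  map (fun p => (fst p, fst (snd p))) D.

Lemma lookup_env_types D x T psi :
  lookup D x = Some (T, psi) -> lookup (env_types D) x = Some T.
Proof.
  induction D as [|[y [T' psi']] D IH]; simpl; [discriminate|].
  destruct (String.eqb y x); [congruence | exact IH].
Qed.

End Erasure.

Section FamilyToLC.
Context {Fe : Type} (P : program (formula Fe)).

Lemma ft_exp_erase th D e T :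
  ft_exp P th D e T -> lc_exp (erase_program P) (env_types D) (erase_exp e) T.
Proof.
  revert th D e T; fix IH 5; intros th D e T H.
  destruct H; simpl.
  - constructor.
  - constructor.
  - econstructor; eapply lookup_env_types; eassumption.
  - apply (T_app _ _ _ _ (erase_fdef fd)).
    + now rewrite find_fun_erase, H.
    + revert H1; apply Forall2_map_both.
      intros a d (T' & HT' & Hsub & _); exists T'; split.
      * exact (IH _ _ _ _ HT').
      * now apply subty_erase.
  - apply (T_member _ _ _ s _ (erase_sdef sd) tt).
    + exact (IH _ _ _ _ H).
    + now rewrite find_struct_erase, H0.
    + eapply find_member_erase; eassumption.
  - apply (T_assign _ _ _ s _ _ (erase_sdef sd) tt _ T1).
    + exact (IH _ _ _ _ H).
    + now rewrite find_struct_erase, H0.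
    + eapply find_member_erase; eassumption.
    + exact (IH _ _ _ _ H3).
    + now apply subty_erase.
  - apply (T_cond _ _ _ _ _ T0 T1 T2).
    + exact (IH _ _ _ _ H).
    + exact (IH _ _ _ _ H0).
    + exact (IH _ _ _ _ H1).
    + now apply is_max_erase.
  - subst T; apply T_seq.
    + destruct es; simpl; congruence.
    + rewrite <- (map_id Ts); revert H1; apply Forall2_map_both.
      intros a Ti HTi; exact (IH _ _ _ _ HTi).
  - apply (T_uop _ _ _ _ T0); [exact (IH _ _ _ _ H) | assumption].
  - apply (T_bop _ _ _ _ _ T1 T2 T3).
    + exact (IH _ _ _ _ H).
    + exact (IH _ _ _ _ H0).
    + now apply is_max_erase.
    + assumption.
  - apply T_malloc; now apply struct_defined_erase.
  - apply (T_mfree _ _ _ s); exact (IH _ _ _ _ H).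
Qed.

Lemma ft_fun_ok_erase th fd : ft_fun_ok P th fd -> lc_fun_ok (erase_program P) (erase_fdef fd).
Proof.
  intros (_ & _ & T' & Hbody & Hsub); exists T'; split.
  - simpl; rewrite map_map.
    replace (map _ (fd_params fd)) with
      (env_types (map (fun d => (snd (snd d), (fst (snd d), fst d))) (fd_params fd)))
      by (unfold env_types; now rewrite map_map).
    now apply ft_exp_erase in Hbody.
  - now apply subty_erase.
Qed.

End FamilyToLC.

Theorem theorem1 :
  forall (Fe : Type) (phi : formula Fe) (P : program (formula Fe)),
    (exists l : list Fe, forall f : Fe, In f l) ->
    wf_program P ->
    ft_prg_ok P phi ->
    lc_prg_ok (erase_program P).
Proof.
  intros Fe phi P _ _ (Hsane & _ & _ & Hfuns); split.
  - now apply sane_erase.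
  - apply Forall_map; revert Hfuns; apply Forall_impl.
    intros fd; apply ft_fun_ok_erase.
Qed.
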